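(* Let $G=(V,E)$ be a graph and consider a routing game on $G$ with players $\pi_1,\dots,\pi_N$, player $\pi_i$ having a strategy set $\mathcal{P}_i$ of paths from $u_i$ to $v_i$, and player cost $\widetilde C_i(\mathbf{p})=\sum_{e\in p_i}2^{C_e(\mathbf{p})}$. If in routing $\mathbf{p}$ a player $\pi_i$ performs a greedy move, producing routing $\mathbf{p}'$, then $\widetilde C_E(\mathbf{p})>\widetilde C_E(\mathbf{p}')$, where $\widetilde C_E(\mathbf{q})=\sum_{e\in E}2^{C_e(\mathbf{q})}$.
   Context: A routing is $\mathbf{p}=[p_1,\dots,p_N]$ with $p_i\in\mathcal{P}_i$; $C_e(\mathbf{p})$ is the number of paths of $\mathbf{p}$ that use edge $e$. A greedy move by player $\pi_i$ in $\mathbf{p}$ is a change of its path from $p_i$ to some $p_i'\in\mathcal{P}_i$ such that $\widetilde C_i(\mathbf{p})>\widetilde C_i(p_i';\mathbf{p}_{-i})$, where $(p_i';\mathbf{p}_{-i})$ denotes the routing obtained from $\mathbf{p}$ by replacing $p_i$ with $p_i'$; the resulting routing is $\mathbf{p}'=(p_i';\mathbf{p}_{-i})$. *)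

From mathcomp Require Import all_boot.
Set Implicit Arguments. Unset Strict Implicit. Unset Printing Implicit Defensive.

Definition joins (V E : finType) (ends1 ends2 : E -> V) (e : E) (x y : V) : bool :=
  ((ends1 e == x) && (ends2 e == y)) || ((ends1 e == y) && (ends2 e == x)).

(* p : seq E is a (simple) path from u to v: there is a duplicate-free vertex
   sequence u = x_0, x_1, ..., x_k = v (k = size p) such that the j-th edge
   of p joins x_j and x_(j+1). *)
Definition is_path (V E : finType) (ends1 ends2 : E -> V) (u v : V) (p : seq E) : Prop :=
  exists xs : seq V,
    [/\ size xs = (size p).+1, head u xs = u, last u xs = v, uniq xs &
        all (fun t : E * (V * V) => joins ends1 ends2 t.1 t.2.1 t.2.2)
            (zip p (zip xs (behead xs)))].

Definition routing (E : finType) (N : nat) := 'I_N -> seq E.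

Definition load (E : finType) (N : nat) (p : routing E N) (e : E) : nat :=
  #|[set i : 'I_N | e \in p i]|.

Definition player_cost (E : finType) (N : nat) (p : routing E N) (i : 'I_N) : nat :=
  \sum_(e : E | e \in p i) 2 ^ load p e.

Definition global_cost (E : finType) (N : nat) (p : routing E N) : nat :=
  \sum_(e : E) 2 ^ load p e.

Definition update (E : finType) (N : nat) (p : routing E N) (i : 'I_N) (q : seq E)
  : routing E N := fun j => if j == i then q else p j.

From mathcomp Require Import all_boot.

(* The global cost is an exact potential.  Fix player i and let L_e be the
   number of other players using edge e.  Then 2^(C_e) = 2^(L_e) + [e in r_i] 2^(L_e),
   so for every routing r that differs from p at most in player i,
   2 ~C_E(r) = 2 sum_e 2^(L_e) + ~C_i(r): a greedy move of player i lowers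
   both sides by the same amount. *)

Section ExactPotential.

Context {E : finType} {N : nat} {p : routing E N} {i : 'I_N}.

Definition others_load (e : E) : nat := #|[set j : 'I_N | (j != i) && (e \in p j)]|.

Context {r : routing E N} (r_agrees : forall j, j != i -> r j = p j).

Lemma load_split (e : E) : load r e = (e \in r i) + others_load e.
Proof.
rewrite /load (cardsD1 i) inE; congr (_ + _); apply: eq_card => j.
by rewrite !inE; case: eqP => [->|/eqP ne] //=; rewrite r_agrees.
Qed.

Lemma player_cost_split :
  player_cost r i = 2 * \sum_(e | e \in r i) 2 ^ others_load e.
Proof.
rewrite /player_cost big_distrr /=; apply: eq_bigr => e e_ri.
by rewrite load_split e_ri expnS.
Qed.

Lemma global_cost_split :
  global_cost r = \sum_e 2 ^ others_load e + \sum_(e | e \in r i) 2 ^ others_load e.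
Proof.
have exp_load e : 2 ^ load r e = 2 ^ others_load e + (e \in r i) * 2 ^ others_load e.
  rewrite load_split; case: (e \in r i).
    by rewrite add1n mul1n expnS mul2n addnn.
  by rewrite add0n mul0n addn0.
rewrite /global_cost (eq_bigr _ (fun e _ => exp_load e)) big_split /=.
congr (_ + _); rewrite [RHS]big_mkcond /=; apply: eq_bigr => e _.
by case: (e \in r i); rewrite ?mul1n ?mul0n.
Qed.

Lemma global_cost_potential :
  2 * global_cost r = 2 * \sum_e 2 ^ others_load e + player_cost r i.
Proof. by rewrite global_cost_split player_cost_split mulnDr. Qed.

End ExactPotential.

Lemma update_agrees {E : finType} {N : nat} (p : routing E N) (i : 'I_N) (q : seq E) :
  forall j, j != i -> update p i q j = p j.
Proof. by move=> j /negbTE ji; rewrite /update ji. Qed.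

Theorem lemma1 (V E : finType) (ends1 ends2 : E -> V) (N : nat)
  (u v : 'I_N -> V) (P : 'I_N -> seq E -> Prop)
  (HP : forall i q, P i q -> is_path ends1 ends2 (u i) (v i) q)
  (p : routing E N) (Hp : forall i, P i (p i))
  (i : 'I_N) (q : seq E) (Hq : P i q)
  (Hgreedy : player_cost (update p i q) i < player_cost p i) :
  global_cost (update p i q) < global_cost p.
Proof.
rewrite -(ltn_pmul2l (isT : 0 < 2)).
rewrite (global_cost_potential (update_agrees p i q)).
rewrite (global_cost_potential (i := i) (r := p) (fun _ _ => erefl)).
by rewrite ltn_add2l.
Qed.
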